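(* Let $\lambda>0$ not be a fusion value, let $C_1,\dots,C_K$ be the clusters of the minimizer $\mathbf x^*$ of (P), and let $\boldsymbol\delta^a$ be a point in the relative interior of the set of $\boldsymbol\delta$-components of optimal solutions of (D-SOCP). Define $r:=\min\{\lambda-\|\boldsymbol\delta^a_{ll'}\|: l<l',\ l,l'\in C_k\text{ for some }k\}$ (over pairs in a common cluster). Then $r>0$. Moreover, if $\boldsymbol\delta$ satisfies $\|\boldsymbol\delta_{ij}-\boldsymbol\delta^a_{ij}\|\le p'\mu$ for all $i<j$, then $\|\boldsymbol\delta_{ij}\|\le\lambda-r+p'\mu$ for all $i<j$ in a common cluster.
   Context: Data: $n\ge2$, $d\ge1$, $\mathbf a_i\in\mathbb R^d$, $r_i>0$, $\lambda>0$. (P): minimize $\frac12\sum_ir_i\|\mathbf x_i-\mathbf a_i\|^2+\lambda\sum_{i<j}r_ir_j\|\mathbf x_i-\mathbf x_j\|$, minimizer $\mathbf x^*(\lambda)$, clusters = classes of $i\sim j\iff\mathbf x_i^*=\mathbf x_j^*$. $\lambda_0>0$ is a fusion value if some $i\ne j$ have $\mathbf x_i^*(\lambda_0)=\mathbf x_j^*(\lambda_0)$ but $\mathbf x_i^*(\lambda)\ne\mathbf x_j^*(\lambda)$ for all $\lambda<\lambda_0$. Antisymmetric notation $\mathbf v_{\langle ij\rangle}=\mathbf v_{ij}$ ($i<j$), $-\mathbf v_{ji}$ ($i>j$), $\mathbf 0$ ($i=j$). (D-SOCP): maximize $\sum_ir_i\mathbf a_i^T\boldsymbol\beta_i+\sum_ir_i\gamma_i$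 over $\boldsymbol\delta_{ij},\boldsymbol\beta_i\in\mathbb R^d$, $\gamma_i\in\mathbb R$ s.t. $\sum_jr_j\boldsymbol\delta_{\langle ij\rangle}+\boldsymbol\beta_i=\mathbf 0$, $\|\boldsymbol\delta_{ij}\|\le\lambda$, $1-\gamma_i\ge\|(\boldsymbol\beta_i,\gamma_i)\|$. $p'\ge0$, $\mu\ge0$ are real numbers. *)

From HB Require Import structures.
From mathcomp Require Import all_boot all_order all_algebra.
From mathcomp Require Import reals.
Set Implicit Arguments. Unset Strict Implicit. Unset Printing Implicit Defensive.
Import Order.TTheory GRing.Theory Num.Theory.
Local Open Scope ring_scope.

Section Defs.
Variables (R : realType) (n d : nat).

Definition enorm (v : 'rV[R]_d) : R := Num.sqrt (\sum_(k < d) v 0 k ^+ 2).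

Definition edot (u v : 'rV[R]_d) : R := \sum_(k < d) u 0 k * v 0 k.

Definition objP (a : 'I_n -> 'rV[R]_d) (w : 'I_n -> R) (lam : R)
  (x : 'I_n -> 'rV[R]_d) : R :=
  2^-1 * \sum_(i < n) w i * enorm (x i - a i) ^+ 2
  + lam * \sum_(i < n) \sum_(j < n | (i < j)%N) w i * w j * enorm (x i - x j).

Definition is_minimizerP a w lam (x : 'I_n -> 'rV[R]_d) : Prop :=
  forall y, objP a w lam x <= objP a w lam y.

Definition fusion_value a w (lam0 : R) : Prop :=
  0 < lam0 /\
  exists i j : 'I_n, i != j /\
    (forall x, is_minimizerP a w lam0 x -> x i = x j) /\
    (forall lam, 0 < lam -> lam < lam0 ->
       forall x, is_minimizerP a w lam x -> x i <> x j).

(* dual variables: delta_{ij} meaningful for i < j only *)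
Definition dvar := 'I_n -> 'I_n -> 'rV[R]_d.

Definition dang (delta : dvar) (i j : 'I_n) : 'rV[R]_d :=
  if (i < j)%N then delta i j else if (j < i)%N then - delta j i else 0.

Definition objD a w (beta : 'I_n -> 'rV[R]_d) (gamma : 'I_n -> R) : R :=
  \sum_(i < n) w i * edot (a i) (beta i) + \sum_(i < n) w i * gamma i.

Definition feasD w (lam : R) (delta : dvar) (beta : 'I_n -> 'rV[R]_d)
  (gamma : 'I_n -> R) : Prop :=
  (forall i : 'I_n, \sum_(j < n) w j *: dang delta i j + beta i = 0) /\
  (forall i j : 'I_n, (i < j)%N -> enorm (delta i j) <= lam) /\
  (forall i : 'I_n,
     Num.sqrt (enorm (beta i) ^+ 2 + gamma i ^+ 2) <= 1 - gamma i).

Definition optD a w lam delta beta gamma : Prop :=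
  feasD w lam delta beta gamma /\
  forall delta' beta' gamma', feasD w lam delta' beta' gamma' ->
    objD a w beta' gamma' <= objD a w beta gamma.

(* the delta-component (coordinates delta_{ij}, i < j) of a dual point;
   coordinates with i >= j are normalised to 0 *)
Definition dproj (delta : dvar) : dvar :=
  fun i j => if (i < j)%N then delta i j else 0.

Definition opt_delta_set a w lam : dvar -> Prop :=
  fun z => exists delta beta gamma, optD a w lam delta beta gamma /\ z = dproj delta.

Definition aff_hull (S : dvar -> Prop) : dvar -> Prop :=
  fun y => exists (m : nat) (c : 'I_m -> R) (s : 'I_m -> dvar),
    (forall k, S (s k)) /\ \sum_(k < m) c k = 1 /\
    forall i j, y i j = \sum_(k < m) c k *: s k i j.

Definition rel_interior (S : dvar -> Prop) : dvar -> Prop :=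
  fun z => S z /\ exists eps : R, 0 < eps /\
    forall y, aff_hull S y ->
      (forall i j, enorm (y i j - z i j) < eps) -> S y.

End Defs.

From HB Require Import structures.
From mathcomp Require Import all_boot all_order all_algebra.
From mathcomp Require Import reals.
From mathcomp Require Import all_classical all_reals.
From mathcomp Require Import topology normedtype derive.
From mathcomp Require Import ring lra.
Import Order.TTheory GRing.Theory Num.Theory.
Import numFieldNormedType.Exports.
Local Open Scope ring_scope.
Set Implicit Arguments. Unset Strict Implicit. Unset Printing Implicit Defensive.

(** Eliminating beta and gamma from (D-SOCP) leaves the
    reduced dual problem: maximise a concave quadratic [rdual] of delta over
    the balls |delta_ij| <= lam.  An exact weak-duality identity
    ([objP_decomp]) shows that any reduced dual optimum delta yields the unique
    minimizer x = a + S(delta) of (P), where S_i(delta) = sum_j w_j delta_<ij>;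
    complementary slackness determines delta across clusters and makes it
    "balanced" inside each cluster.  A balanced family of norm <= t fuses its
    group for every level >= t ([balanced_group_fuses]), so clusters only merge
    as lam grows.  If lam is not a fusion value, each cluster at lam already
    exists at some level T < lam ([cluster_formed_below]); swapping in the dual
    variables of that level gives another optimal dual solution whose
    in-cluster variables have norm <= T < lam ([cluster_swap_optimal]).  A
    relative-interior optimal solution with |delta_ll'| = lam inside a cluster
    could then be extrapolated away from it out of the feasible ball, which is
    absurd ([cluster_slack_strict]).  Hence r > 0, and the second claim of the
    theorem is the triangle inequality. *)

Section Euclid.
Variables (R : realType) (d : nat).
Implicit Types (u v x : 'rV[R]_d).

Lemma edotC u v : edot u v = edot v u.
Proof. by apply: eq_bigr => k _; rewrite mulrC. Qed.

Lemma edotDl u v x : edot (u + v) x = edot u x + edot v x.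
Proof. by rewrite /edot -big_split; apply: eq_bigr => k _; rewrite !mxE mulrDl. Qed.

Lemma edotZl c u v : edot (c *: u) v = c * edot u v.
Proof. by rewrite /edot mulr_sumr; apply: eq_bigr => k _; rewrite !mxE mulrA. Qed.

Lemma edotNl u v : edot (- u) v = - edot u v.
Proof. by rewrite -scaleN1r edotZl mulN1r. Qed.

Lemma edotBl u v x : edot (u - v) x = edot u x - edot v x.
Proof. by rewrite edotDl edotNl. Qed.

Lemma edot0l v : edot 0 v = 0.
Proof. by rewrite -(scale0r (0 : 'rV_d)) edotZl mul0r. Qed.

Lemma edotDr u v x : edot x (u + v) = edot x u + edot x v.
Proof. by rewrite edotC edotDl !(edotC x). Qed.

Lemma edotZr c u v : edot v (c *: u) = c * edot v u.
Proof. by rewrite edotC edotZl edotC. Qed.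

Lemma edotNr u v : edot v (- u) = - edot v u.
Proof. by rewrite edotC edotNl edotC. Qed.

Lemma edotBr u v x : edot x (u - v) = edot x u - edot x v.
Proof. by rewrite edotDr edotNr. Qed.

Lemma edot0r v : edot v 0 = 0.
Proof. by rewrite edotC edot0l. Qed.

Lemma edot_suml I (r : seq I) (P : pred I) (F : I -> 'rV[R]_d) v :
  edot (\sum_(i <- r | P i) F i) v = \sum_(i <- r | P i) edot (F i) v.
Proof.
by apply: (big_morph (fun u => edot u v)) => [u x|]; rewrite ?edotDl ?edot0l.
Qed.

Lemma edot_sumr I (r : seq I) (P : pred I) (F : I -> 'rV[R]_d) v :
  edot v (\sum_(i <- r | P i) F i) = \sum_(i <- r | P i) edot v (F i).
Proof. by rewrite edotC edot_suml; apply: eq_bigr => i _; rewrite edotC. Qed.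

Lemma edot_sqrD u v : edot (u + v) (u + v) = edot u u + 2%:R * edot u v + edot v v.
Proof. by rewrite edotDl !edotDr (edotC v u); ring. Qed.

Lemma edot_ge0 v : 0 <= edot v v.
Proof. by apply: sumr_ge0 => k _; rewrite -expr2 sqr_ge0. Qed.

Lemma edot_eq0 v : edot v v = 0 -> v = 0.
Proof.
move=> /eqP; rewrite psumr_eq0 => [/allP v0|k _]; last by rewrite -expr2 sqr_ge0.
apply/rowP => k; rewrite mxE.
by have /= := v0 k (mem_index_enum k); rewrite -expr2 sqrf_eq0 => /eqP.
Qed.

Lemma enormE v : enorm v = Num.sqrt (edot v v).
Proof. by congr Num.sqrt; apply: eq_bigr => k _; rewrite expr2. Qed.

Lemma enorm_ge0 v : 0 <= enorm v.
Proof. exact: sqrtr_ge0. Qed.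

Lemma enorm_sq v : enorm v ^+ 2 = edot v v.
Proof. by rewrite enormE sqr_sqrtr // edot_ge0. Qed.

Lemma enorm0 : enorm (0 : 'rV[R]_d) = 0.
Proof. by rewrite enormE edot0l sqrtr0. Qed.

Lemma enorm_eq0 v : enorm v = 0 -> v = 0.
Proof. by move=> v0; apply: edot_eq0; rewrite -enorm_sq v0 expr0n. Qed.

Lemma enorm_gt0 v : v != 0 -> 0 < enorm v.
Proof.
move=> v0; rewrite lt_def enorm_ge0 andbT.
by apply/eqP => /enorm_eq0 e; rewrite e eqxx in v0.
Qed.

Lemma enormZ c v : enorm (c *: v) = `|c| * enorm v.
Proof. by rewrite !enormE edotZl edotZr mulrA -expr2 sqrtrM ?sqr_ge0 // sqrtr_sqr. Qed.

Lemma enormN v : enorm (- v) = enorm v.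
Proof. by rewrite -scaleN1r enormZ normrN1 mul1r. Qed.

Lemma enormB u v : enorm (u - v) = enorm (v - u).
Proof. by rewrite -enormN opprB. Qed.

Lemma enorm_coord v k : `|v 0 k| <= enorm v.
Proof.
rewrite enormE -sqrtr_sqr ler_sqrt ?edot_ge0 // /edot (bigD1 k) //= expr2 lerDl.
by apply: sumr_ge0 => j _; rewrite -expr2 sqr_ge0.
Qed.

(* Cauchy-Schwarz: expand the square of A u - B v, with A = |v|^2, B = <u,v>. *)
Lemma cauchy_schwarz_sq u v : edot u v ^+ 2 <= edot u u * edot v v.
Proof.
have [->|v0] := eqVneq v 0; first by rewrite !edot0r expr0n mulr0.
set A := edot v v; set B := edot u v; set C := edot u u.
have A0 : 0 < A by rewrite /A -enorm_sq exprn_gt0 // enorm_gt0.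
have := edot_ge0 (A *: u - B *: v).
rewrite !(edotBl, edotBr, edotZl, edotZr) -/A -/B -/C (edotC v u) -/B => h.
have : 0 <= A * (A * C - B ^+ 2) by nra.
by rewrite pmulr_rge0 // subr_ge0 mulrC.
Qed.

Lemma cauchy_schwarz u v : edot u v <= enorm u * enorm v.
Proof.
have [uv0|uv0] := lerP (edot u v) 0; first by rewrite (le_trans uv0) ?mulr_ge0 ?enorm_ge0.
rewrite !enormE -sqrtrM ?edot_ge0 // -(ger0_norm (ltW uv0)) -sqrtr_sqr.
by rewrite ler_sqrt ?mulr_ge0 ?edot_ge0 // cauchy_schwarz_sq.
Qed.

Lemma cauchy_schwarzN u v : - edot u v <= enorm u * enorm v.
Proof. by rewrite -edotNl -(enormN u) cauchy_schwarz. Qed.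

Lemma enormD u v : enorm (u + v) <= enorm u + enorm v.
Proof.
have uv0 : 0 <= enorm u + enorm v by rewrite addr_ge0 ?enorm_ge0.
rewrite -(ger0_norm uv0) -sqrtr_sqr enormE ler_sqrt ?sqr_ge0 //.
by rewrite edot_sqrD sqrrD !enorm_sq; have := cauchy_schwarz u v; lra.
Qed.

Lemma enorm_lbB u v : enorm u - enorm v <= enorm (u - v).
Proof. by have := enormD (u - v) v; rewrite subrK; lra. Qed.

Lemma enorm_sum I (r : seq I) (P : pred I) (F : I -> 'rV[R]_d) :
  enorm (\sum_(i <- r | P i) F i) <= \sum_(i <- r | P i) enorm (F i).
Proof.
elim: r => [|i r IH]; first by rewrite !big_nil enorm0.
by rewrite !big_cons; case: (P i) => //; rewrite (le_trans (enormD _ _)) ?lerD2l.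
Qed.

Lemma enorm_convex v v' t s : enorm v <= t -> enorm v' <= t -> 0 <= s <= 1 ->
  enorm ((1 - s) *: v + s *: v') <= t.
Proof.
move=> vt v't /andP[s0 s1]; rewrite (le_trans (enormD _ _)) // !enormZ.
by rewrite !ger0_norm ?subr_ge0 //; nra.
Qed.

Lemma antialigned_eq (D v : 'rV[R]_d) t : D != 0 -> enorm v <= t ->
  t * enorm D + edot D v <= 0 -> v = (- t / enorm D) *: D.
Proof.
move=> D0 vt tDv.
have t0 : 0 <= t by apply: le_trans vt; apply: enorm_ge0.
have nD0 := enorm_gt0 D0.
pose u := (enorm D)^-1 *: D.
have uu : edot u u = 1.
  by rewrite -enorm_sq enormZ ger0_norm ?invr_ge0 ?enorm_ge0 // mulVf ?gt_eqF // expr1n.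
have uv : edot u v <= - t.
  by rewrite edotZl -(ler_pM2l nD0) mulrA mulfV ?gt_eqF // mul1r; lra.
have vv : edot v v <= t ^+ 2 by rewrite -enorm_sq lerXn2r ?nnegrE ?enorm_ge0.
have uE : u = (enorm D)^-1 *: D by [].
clearbody u.
have : edot (v + t *: u) (v + t *: u) = 0.
  apply/eqP; rewrite eq_le edot_ge0 andbT.
  by rewrite !(edotDl, edotDr, edotZl, edotZr) uu (edotC v u); nra.
move/edot_eq0/eqP; rewrite addr_eq0 => /eqP ->.
by rewrite uE scalerA mulNr scaleNr.
Qed.

End Euclid.

Lemma linear_le_quadratic (R : realFieldType) (L Q : R) : 0 <= Q ->
  (forall s, 0 < s -> s <= 1 -> s * L <= s ^+ 2 * Q) -> L <= 0.
Proof.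
move=> Q0 LQ; rewrite leNgt; apply/negP => L0.
have den : 0 < L + Q + 1 by lra.
pose s := L / (L + Q + 1).
have s0 : 0 < s by rewrite divr_gt0.
have s1 : s <= 1 by rewrite ler_pdivrMr // mul1r; lra.
have : s * Q < L by rewrite /s mulrAC ltr_pdivrMr //; nra.
by have := LQ s s0 s1; rewrite expr2 -mulrA ler_pM2l //; lra.
Qed.

Lemma finite_common_bound (R : realType) (I : finType) (P : I -> Prop)
    (Q : I -> R -> Prop) (lam : R) :
  0 < lam -> (forall i, P i -> exists2 v, v < lam & Q i v) ->
  exists T, [/\ 0 <= T, T < lam & forall i, P i -> exists2 v, v <= T & Q i v].
Proof.
move=> lam0 PQ.
suff [T [T0 Tlam HT]] : exists T, [/\ 0 <= T, T < lam &
    forall i, i \in enum I -> P i -> exists2 v, v <= T & Q i v]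
  by exists T; split => // i; apply: HT; rewrite mem_enum.
elim: (enum I) => [|i s [T [T0 Tlam HT]]]; first by exists 0; split.
have [Pi|nPi] := pselect (P i); last first.
  by exists T; split => // j; rewrite inE => /orP[/eqP -> //|]; apply: HT.
have [v vlam Qv] := PQ i Pi.
exists (Num.max T v); split; rewrite ?le_max ?T0 ?gt_max ?Tlam ?vlam //.
move=> j; rewrite inE => /orP[/eqP -> _|js Pj]; first by exists v; rewrite // le_max lexx orbT.
by have [u uT Qu] := HT j js Pj; exists u; rewrite // le_max uT.
Qed.

Lemma sum_split_pairs (V : zmodType) (n : nat) (h : 'I_n -> 'I_n -> V) :
  \sum_(i < n) \sum_(j < n) h i j =
  \sum_(i < n) \sum_(j < n | (i < j)%N) (h i j + h j i) + \sum_(i < n) h i i.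
Proof.
have rowE i : \sum_(j < n) h i j = \sum_(j < n | (i < j)%N) h i j
    + \sum_(j < n) (if (j < i)%N then h i j else 0) + h i i.
  have -> : h i i = \sum_(j < n) (if j == i then h i j else 0).
    by rewrite -big_mkcond big_pred1_eq.
  rewrite [\sum_(j < n | (i < j)%N) _]big_mkcond -!big_split /=.
  apply: eq_bigr => j _; have [->|ji] := eqVneq j i; first by rewrite ltnn !add0r.
  rewrite addr0; case: (ltngtP i j) => [_|_|/val_inj eij]; rewrite ?addr0 ?add0r //.
  by rewrite eij eqxx in ji.
rewrite (eq_bigr _ (fun i _ => rowE i)) !big_split /=; congr (_ + _).
rewrite [X in _ + X = _]exchange_big -big_split; apply: eq_bigr => i _ /=.
by rewrite big_split /= [\sum_(j < n | (i < j)%N) h j i]big_mkcond.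
Qed.

Lemma sum_antisym0 (R : numFieldType) (V : lmodType R) (n : nat) (P : pred 'I_n)
    (g : 'I_n -> 'I_n -> V) : (forall i j, g j i = - g i j) ->
  \sum_(i < n | P i) \sum_(j < n | P j) g i j = 0.
Proof.
move=> g_anti; set X := \sum_(i < n | P i) _.
have : X = - X.
  rewrite {1}/X exchange_big -sumrN; apply: eq_bigr => i _.
  by rewrite -sumrN; apply: eq_bigr => j _; apply: g_anti.
move/eqP; rewrite -addr_eq0 -mulr2n -scaler_nat scaler_eq0 pnatr_eq0 /=.
by move/eqP.
Qed.

Lemma sum_pair_indicator (V : zmodType) (n : nat) (p q : 'I_n) (c : V) : (p < q)%N ->
  \sum_(i < n) \sum_(j < n | (i < j)%N) (if (i == p) && (j == q) then c else 0) = c.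
Proof.
move=> pq; rewrite (bigD1 p) //= [X in _ + X]big1 ?addr0; last first.
  by move=> i /negbTE ip; rewrite big1 // => j _; rewrite ip.
rewrite (bigD1 q) //= [X in _ + X]big1 ?addr0 ?eqxx //.
by move=> j /andP[_ /negbTE ->]; rewrite andbF.
Qed.

Section Antisymmetric.
Variables (R : realType) (n d : nat).
Implicit Types (delta E : dvar R n d) (i j : 'I_n).

Definition dfeas (t : R) delta := forall i j : 'I_n, (i < j)%N -> enorm (delta i j) <= t.

Lemma dang_diag delta i : dang delta i i = 0.
Proof. by rewrite /dang ltnn. Qed.

Lemma dang_anti delta i j : dang delta j i = - dang delta i j.
Proof. by rewrite /dang; case: (ltngtP i j) => _; rewrite ?opprK ?oppr0. Qed.

Lemma dang_lt delta i j : (i < j)%N -> dang delta i j = delta i j.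
Proof. by rewrite /dang => ->. Qed.

Lemma dang_lin delta E (s : R) i j :
  dang (fun i j => delta i j + s *: E i j) i j = dang delta i j + s *: dang E i j.
Proof.
rewrite /dang; case: ifP => _ //; case: ifP => _; last by rewrite scaler0 addr0.
by rewrite opprD scalerN.
Qed.

Lemma dang_le t delta : 0 <= t -> dfeas t delta -> forall i j, enorm (dang delta i j) <= t.
Proof.
move=> t0 hf i j; rewrite /dang; case: ifP => ij; first exact: hf.
by case: ifP => ji; rewrite ?enormN ?hf ?enorm0.
Qed.

Lemma dproj_le t delta : 0 <= t -> dfeas t delta -> forall i j, enorm (dproj delta i j) <= t.
Proof. by move=> t0 hf i j; rewrite /dproj; case: ifP => ij; rewrite ?hf ?enorm0. Qed.

Lemma dang_dproj delta : dang (dproj delta) = dang delta.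
Proof.
apply: funext => i; apply: funext => j.
by rewrite /dang /dproj; case: (ltngtP i j).
Qed.

End Antisymmetric.

Section ReducedDual.
Variables (R : realType) (n d : nat) (a : 'I_n -> 'rV[R]_d) (w : 'I_n -> R).
Hypothesis hw : forall i, 0 < w i.
Implicit Types (delta E : dvar R n d) (y : 'I_n -> 'rV[R]_d) (i j : 'I_n).

(* S_i(delta) = sum_j w_j delta_<ij>; the constraint of (D-SOCP) forces
   beta_i = - S_i(delta). *)
Definition dshift delta i : 'rV[R]_d := \sum_(j < n) w j *: dang delta i j.

Definition dpoint delta i : 'rV[R]_d := a i + dshift delta i.

(* The dual objective once beta and gamma are optimised out. *)
Definition rdual delta : R := \sum_(i < n) w i *
  (- edot (a i) (dshift delta i) - 2^-1 * edot (dshift delta i) (dshift delta i)).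

Definition ropt (t : R) delta : Prop :=
  dfeas t delta /\ forall delta', dfeas t delta' -> rdual delta' <= rdual delta.

Definition penalty y : R :=
  \sum_(i < n) \sum_(j < n | (i < j)%N) w i * w j * enorm (y i - y j).

Definition dgap (t : R) delta y : R := \sum_(i < n) \sum_(j < n | (i < j)%N)
  w i * w j * (t * enorm (y i - y j) + edot (y i - y j) (delta i j)).

Lemma sum_dot_dshift delta y :
  \sum_(i < n) w i * edot (y i) (dshift delta i) =
  \sum_(i < n) \sum_(j < n | (i < j)%N) w i * w j * edot (y i - y j) (delta i j).
Proof.
have -> : \sum_(i < n) w i * edot (y i) (dshift delta i) =
    \sum_(i < n) \sum_(j < n) w i * w j * edot (y i) (dang delta i j).
  apply: eq_bigr => i _; rewrite edot_sumr mulr_sumr; apply: eq_bigr => j _.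
  by rewrite edotZr mulrA.
rewrite sum_split_pairs [X in _ + X]big1 ?addr0; last first.
  by move=> i _; rewrite dang_diag edot0r mulr0.
apply: eq_bigr => i _; apply: eq_bigr => j ij.
by rewrite (dang_anti _ i j) dang_lt // edotNr edotBl; ring.
Qed.

Lemma objP_decomp t delta y : objP a w t y =
  2^-1 * \sum_(i < n) w i * edot (y i - dpoint delta i) (y i - dpoint delta i)
  + rdual delta + dgap t delta y.
Proof.
have two0 : (2%:R : R) != 0 by rewrite pnatr_eq0.
rewrite /objP -/(penalty y).
have -> : dgap t delta y = t * penalty y + \sum_(i < n) w i * edot (y i) (dshift delta i).
  rewrite sum_dot_dshift /penalty mulr_sumr -big_split; apply: eq_bigr => i _.
  by rewrite mulr_sumr -big_split; apply: eq_bigr => j _ /=; ring.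
have -> : \sum_(i < n) w i * enorm (y i - a i) ^+ 2 =
    \sum_(i < n) w i * edot (y i - dpoint delta i) (y i - dpoint delta i)
    + 2%:R * \sum_(i < n) w i * edot (y i) (dshift delta i)
    + 2%:R * rdual delta.
  rewrite /rdual !mulr_sumr -!big_split; apply: eq_bigr => i _ /=.
  have -> : y i - a i = (y i - dpoint delta i) + dshift delta i.
    by rewrite /dpoint opprD addrA subrK.
  rewrite enorm_sq edot_sqrD /dpoint.
  rewrite !(edotBl, edotBr, edotDl, edotDr) (edotC (dshift delta i)).
  by field.
rewrite !mulrDr !mulrA mulVf // !mul1r; ring.
Qed.

(* Weak duality: by Cauchy-Schwarz each term of the gap is nonnegative. *)
Lemma dgap_ge0 t delta y : dfeas t delta -> 0 <= dgap t delta y.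
Proof.
move=> hf; apply: sumr_ge0 => i _; apply: sumr_ge0 => j ij.
apply: mulr_ge0; first by rewrite mulr_ge0 ?ltW.
have := cauchy_schwarzN (y i - y j) (delta i j); have := hf i j ij.
by have := enorm_ge0 (y i - y j); nra.
Qed.

Lemma dshift_lin delta E (s : R) i :
  dshift (fun i j => delta i j + s *: E i j) i = dshift delta i + s *: dshift E i.
Proof.
rewrite /dshift scaler_sumr -big_split; apply: eq_bigr => j _.
by rewrite dang_lin scalerDr !scalerA mulrC.
Qed.

Lemma rdual_lin delta E (s : R) :
  rdual (fun i j => delta i j + s *: E i j) = rdual delta
    - s * \sum_(i < n) w i * edot (dpoint delta i) (dshift E i)
    - s ^+ 2 * (2^-1 * \sum_(i < n) w i * edot (dshift E i) (dshift E i)).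
Proof.
rewrite /rdual !mulr_sumr -!sumrN -!big_split; apply: eq_bigr => i _ /=.
rewrite dshift_lin /dpoint !(edotDl, edotDr, edotZl, edotZr).
by rewrite (edotC (dshift E i) (dshift delta i)); field.
Qed.

Lemma rdual_dproj delta : rdual (dproj delta) = rdual delta.
Proof. by rewrite /rdual /dshift dang_dproj. Qed.

(* Complementary slackness: at a reduced dual optimum every pair p < q has
   t |z_p - z_q| + <z_p - z_q, delta_pq> <= 0; otherwise moving delta_pq
   towards - t (z_p - z_q)/|z_p - z_q| increases rdual to first order. *)
Lemma ropt_slackness t delta : ropt t delta -> forall p q : 'I_n, (p < q)%N ->
  t * enorm (dpoint delta p - dpoint delta q)
  + edot (dpoint delta p - dpoint delta q) (delta p q) <= 0.
Proof.
move=> [hf hopt] p q pq; set D : 'rV[R]_d := dpoint delta p - dpoint delta q.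
have t0 : 0 <= t by apply: le_trans (hf p q pq); apply: enorm_ge0.
have [->|D0] := eqVneq D 0; first by rewrite enorm0 mulr0 edot0l addr0.
pose u := (enorm D)^-1 *: D.
have nu : enorm u = 1.
  by rewrite enormZ ger0_norm ?invr_ge0 ?enorm_ge0 // mulVf // gt_eqF // enorm_gt0.
have Du : edot D u = enorm D.
  by rewrite edotZr -enorm_sq expr2 mulrA mulVf ?mul1r // gt_eqF // enorm_gt0.
pose e := - (t *: u) - delta p q.
pose E : dvar R n d := fun i j => if (i == p) && (j == q) then e else 0.
have hE : \sum_(i < n) w i * edot (dpoint delta i) (dshift E i) = w p * w q * edot D e.
  rewrite sum_dot_dshift -(sum_pair_indicator (w p * w q * edot D e) pq); apply: eq_bigr => i _.
  apply: eq_bigr => j _; rewrite /E.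
  by case: ifP => [/andP[/eqP -> /eqP ->]//|_]; rewrite edot0r mulr0.
have perturb s : 0 < s -> s <= 1 ->
    s * (- (w p * w q * edot D e)) <=
    s ^+ 2 * (2^-1 * \sum_(i < n) w i * edot (dshift E i) (dshift E i)).
  move=> s0 s1; have hfs : dfeas t (fun i j => delta i j + s *: E i j).
    move=> i j ij; rewrite /E; case: ifP => [/andP[/eqP -> /eqP ->]|_]; last first.
      by rewrite scaler0 addr0 hf.
    have -> : delta p q + s *: e = (1 - s) *: delta p q + s *: (- (t *: u)).
      by apply/rowP => k; rewrite !mxE; ring.
    apply: enorm_convex; first exact: hf.
      by rewrite enormN enormZ nu mulr1 ger0_norm.
    by rewrite (ltW s0) s1.
  by have := hopt _ hfs; rewrite rdual_lin hE; lra.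
have := linear_le_quadratic _ perturb; rewrite mulr_ge0 ?invr_ge0 ?ler0n //; last first.
  by apply: sumr_ge0 => i _; rewrite mulr_ge0 ?edot_ge0 ?ltW.
move=> /(_ isT); rewrite oppr_le0 pmulr_rge0 ?mulr_gt0 //.
by rewrite /e edotBr edotNr edotZr Du; lra.
Qed.

Lemma dgap_dpoint_le0 t delta : ropt t delta -> dgap t delta (dpoint delta) <= 0.
Proof.
move=> ho; apply: sumr_le0 => i _; apply: sumr_le0 => j ij.
by rewrite pmulr_rle0 ?mulr_gt0 // ropt_slackness.
Qed.

Lemma ropt_objP_bound t delta : ropt t delta -> forall y,
  objP a w t (dpoint delta)
  + 2^-1 * \sum_(i < n) w i * edot (y i - dpoint delta i) (y i - dpoint delta i)
  <= objP a w t y.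
Proof.
move=> ho y; rewrite (objP_decomp t delta y) (objP_decomp t delta (dpoint delta)).
rewrite big1 ?mulr0 ?add0r => [|i _]; last by rewrite subrr edot0l mulr0.
by have := dgap_dpoint_le0 ho; have := dgap_ge0 y (proj1 ho); lra.
Qed.

Lemma ropt_minimizer t delta : ropt t delta -> is_minimizerP a w t (dpoint delta).
Proof.
move=> ho y; apply: le_trans (ropt_objP_bound ho y); rewrite lerDl mulr_ge0 ?invr_ge0 //.
by apply: sumr_ge0 => i _; rewrite mulr_ge0 ?edot_ge0 ?ltW.
Qed.

Lemma ropt_minimizer_unique t delta y :
  ropt t delta -> is_minimizerP a w t y -> y = dpoint delta.
Proof.
move=> ho hy; have := ropt_objP_bound ho y; have := hy (dpoint delta).
set S := \sum_(i < n) _ => h1 h2.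
have : S == 0.
  rewrite eq_le (_ : S <= 0) /=; last by lra.
  by apply: sumr_ge0 => i _; rewrite mulr_ge0 ?edot_ge0 ?ltW.
rewrite psumr_eq0 => [/allP S0|i _]; last by rewrite mulr_ge0 ?edot_ge0 ?ltW.
apply: funext => i; apply/eqP; rewrite -subr_eq0; apply/eqP/edot_eq0.
by have /= := S0 i (mem_index_enum i); rewrite mulf_eq0 gt_eqF //= => /eqP.
Qed.

End ReducedDual.

Section Clusters.
Variables (R : realType) (n d : nat) (a : 'I_n -> 'rV[R]_d) (w : 'I_n -> R).
Hypothesis hw : forall i, 0 < w i.
Implicit Types (delta D : 'I_n -> 'I_n -> 'rV[R]_d) (x : 'I_n -> 'rV[R]_d)
  (P : pred 'I_n) (i j l p q : 'I_n).

Local Notation dpoint := (dpoint a w).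
Local Notation ropt := (ropt a w).

Lemma ropt_cross t delta : ropt t delta -> forall i j, dpoint delta i != dpoint delta j ->
  dang delta i j =
  (- t / enorm (dpoint delta i - dpoint delta j)) *: (dpoint delta i - dpoint delta j).
Proof.
move=> ho.
have lt_case p q : (p < q)%N -> dpoint delta p != dpoint delta q ->
    delta p q = (- t / enorm (dpoint delta p - dpoint delta q))
                *: (dpoint delta p - dpoint delta q).
  move=> pq zpq; apply: antialigned_eq; rewrite ?subr_eq0 //; first exact: (proj1 ho).
  exact: ropt_slackness.
move=> i j zij; case: (ltngtP i j) => [ij|ji|/val_inj eij].
- by rewrite dang_lt // lt_case.
- rewrite -(opprK (dang _ i j)) -dang_anti dang_lt // lt_case 1?eq_sym //.
  by rewrite enormB -scalerN opprB.
- by rewrite eij eqxx in zij.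
Qed.

Lemma ropt_cluster_balance t delta l : ropt t delta -> exists c, forall i,
  dpoint delta i = dpoint delta l ->
  a i + \sum_(j < n | dpoint delta j == dpoint delta l) w j *: dang delta i j = c.
Proof.
move=> ho; pose out := [pred j | dpoint delta j != dpoint delta l].
exists (dpoint delta l - \sum_(j < n | out j) w j *: dang delta l j) => i zil.
have outE : \sum_(j < n | out j) w j *: dang delta i j =
            \sum_(j < n | out j) w j *: dang delta l j.
  apply: eq_bigr => j /= zjl.
  have zlj : dpoint delta l != dpoint delta j by rewrite eq_sym.
  by rewrite !(ropt_cross ho) ?zil.
have split : dpoint delta i =
    a i + \sum_(j < n | dpoint delta j == dpoint delta l) w j *: dang delta i j
    + \sum_(j < n | out j) w j *: dang delta i j.
  by rewrite /dpoint /dshift (bigID (fun j => dpoint delta j == dpoint delta l)) addrA.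
by apply/eqP; rewrite eq_sym subr_eq -outE -split zil.
Qed.

Lemma balance_mean P D c : (forall i j, D j i = - D i j) ->
  (forall i, P i -> a i + \sum_(j < n | P j) w j *: D i j = c) ->
  (\sum_(i < n | P i) w i) *: c = \sum_(i < n | P i) w i *: a i.
Proof.
move=> D_anti hc; rewrite scaler_suml.
rewrite (eq_bigr (fun i => w i *: a i + w i *: \sum_(j < n | P j) w j *: D i j)); last first.
  by move=> i Pi; rewrite -scalerDr hc.
rewrite big_split /= [X in _ + X](_ : _ = 0) ?addr0 //.
rewrite -[RHS](@sum_antisym0 _ _ _ P (fun i j => (w i * w j) *: D i j)); last first.
  by move=> i j; rewrite D_anti scalerN mulrC.
by apply: eq_bigr => i _; rewrite scaler_sumr; apply: eq_bigr => j _; rewrite scalerA.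
Qed.

Lemma sum_w_gt0 P l : P l -> 0 < \sum_(i < n | P i) w i.
Proof.
move=> Pl; rewrite (bigD1 l) //= ltr_pwDl ?hw //.
by apply: sumr_ge0 => i _; apply: ltW.
Qed.

Definition wmean P x : 'rV[R]_d :=
  (\sum_(i < n | P i) w i)^-1 *: \sum_(i < n | P i) w i *: x i.

Definition collapse P (m : 'rV[R]_d) x i : 'rV[R]_d := if P i then m else x i.

Lemma wmean_centered P l x : P l -> \sum_(i < n | P i) w i *: (x i - wmean P x) = 0.
Proof.
move=> Pl; have W0 := sum_w_gt0 Pl.
rewrite (eq_bigr (fun i => w i *: x i - w i *: wmean P x)); last first.
  by move=> i _; rewrite scalerBr.
by rewrite sumrB -scaler_suml /wmean scalerA mulfV ?gt_eqF // scale1r subrr.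
Qed.

Lemma wmean_dist P l x u : P l ->
  (\sum_(j < n | P j) w j) * enorm (wmean P x - u) <= \sum_(j < n | P j) w j * enorm (x j - u).
Proof.
move=> Pl; have W0 := sum_w_gt0 Pl.
have -> : (\sum_(j < n | P j) w j) * enorm (wmean P x - u) =
          enorm (\sum_(j < n | P j) w j *: (x j - wmean P x + (wmean P x - u))).
  rewrite (eq_bigr (fun j => w j *: (x j - wmean P x) + w j *: (wmean P x - u))); last first.
    by move=> j _; rewrite scalerDr.
  by rewrite big_split /= (wmean_centered x Pl) add0r -scaler_suml enormZ ger0_norm ?ltW.
apply: le_trans (enorm_sum _ _ _) _; apply: ler_sum => j _.
by rewrite addrA subrK enormZ ger0_norm // ltW.
Qed.

Definition full_penalty x : R := \sum_(i < n) \sum_(j < n) w i * w j * enorm (x i - x j).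

Lemma penalty_full x : penalty w x = 2^-1 * full_penalty x.
Proof.
rewrite /full_penalty sum_split_pairs [X in _ * (_ + X)]big1 ?addr0; last first.
  by move=> i _; rewrite subrr enorm0 mulr0.
rewrite /penalty mulr_sumr; apply: eq_bigr => i _; rewrite mulr_sumr.
apply: eq_bigr => j _; rewrite enormB (mulrC (w j)).
have two0 : (2%:R : R) != 0 by rewrite pnatr_eq0.
by field.
Qed.

Lemma collapse_penalty P l x : P l ->
  full_penalty (collapse P (wmean P x) x)
  + \sum_(i < n | P i) \sum_(j < n | P j) w i * w j * enorm (x i - x j)
  <= full_penalty x.
Proof.
move=> Pl; set m := wmean P x; set W := \sum_(j < n | P j) w j.
have mdist u : W * enorm (m - u) <= \sum_(j < n | P j) w j * enorm (x j - u).
  exact: wmean_dist x u Pl.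
rewrite /full_penalty /collapse (bigID P) [X in _ <= X](bigID P) /=.
have outside : \sum_(i < n | ~~ P i) \sum_(j < n) w i * w j *
      enorm ((if P i then m else x i) - (if P j then m else x j))
   <= \sum_(i < n | ~~ P i) \sum_(j < n) w i * w j * enorm (x i - x j).
  apply: ler_sum => i /negbTE Pi; rewrite Pi (bigID P) [X in _ <= X](bigID P) /=.
  rewrite [X in _ + X <= _](eq_bigr (fun j => w i * w j * enorm (x i - x j))); last first.
    by move=> j /negbTE ->.
  rewrite lerD2r (eq_bigr (fun j => w i * (w j * enorm (m - x i)))); last first.
    by move=> j ->; rewrite enormB mulrA.
  rewrite -mulr_sumr -mulr_suml -/W.
  rewrite (eq_bigr (fun j => w i * (w j * enorm (x j - x i)))); last first.
    by move=> j _; rewrite enormB mulrA.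
  by rewrite -mulr_sumr; apply: ler_wpM2l; [exact: ltW | exact: mdist].
have inside : \sum_(i < n | P i) \sum_(j < n) w i * w j *
      enorm ((if P i then m else x i) - (if P j then m else x j))
   <= \sum_(i < n | P i) \sum_(j < n | ~~ P j) w i * w j * enorm (x i - x j).
  rewrite (eq_bigr (fun i => \sum_(j < n | ~~ P j) w i * w j * enorm (m - x j))); last first.
    move=> i Pi; rewrite Pi (bigID P) /= big1 ?add0r => [|j ->]; last first.
      by rewrite subrr enorm0 mulr0.
    by apply: eq_bigr => j /negbTE ->.
  rewrite exchange_big [X in _ <= X]exchange_big /=; apply: ler_sum => j _.
  rewrite (eq_bigr (fun i => w j * (w i * enorm (m - x j)))); last first.
    by move=> i _; rewrite mulrA (mulrC (w j)).
  rewrite -mulr_sumr -mulr_suml -/W.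
  rewrite [X in _ <= X](eq_bigr (fun i => w j * (w i * enorm (x i - x j)))); last first.
    by move=> i _; rewrite mulrA (mulrC (w j)).
  by rewrite -mulr_sumr; apply: ler_wpM2l; [exact: ltW | exact: mdist].
have split_inside : \sum_(i < n | P i) \sum_(j < n) w i * w j * enorm (x i - x j) =
    \sum_(i < n | P i) \sum_(j < n | P j) w i * w j * enorm (x i - x j) +
    \sum_(i < n | P i) \sum_(j < n | ~~ P j) w i * w j * enorm (x i - x j).
  by rewrite -big_split; apply: eq_bigr => i _; rewrite (bigID P).
by rewrite split_inside; lra.
Qed.

Lemma collapse_fit P m x :
  \sum_(i < n) w i * enorm (collapse P m x i - a i) ^+ 2 =
  \sum_(i < n) w i * enorm (x i - a i) ^+ 2
  - \sum_(i < n | P i) w i * edot (x i - m) (x i - m)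
  - 2%:R * \sum_(i < n | P i) w i * edot (x i - m) (m - a i).
Proof.
rewrite (bigID P) [X in _ = X - _ - _](bigID P) /= /collapse.
rewrite [X in _ + X = _](eq_bigr (fun i => w i * enorm (x i - a i) ^+ 2)); last first.
  by move=> i /negbTE ->.
suff -> : \sum_(i < n | P i) w i * enorm ((if P i then m else x i) - a i) ^+ 2 =
    \sum_(i < n | P i) w i * enorm (x i - a i) ^+ 2
    - \sum_(i < n | P i) w i * edot (x i - m) (x i - m)
    - 2%:R * \sum_(i < n | P i) w i * edot (x i - m) (m - a i) by ring.
rewrite mulr_sumr -!sumrB; apply: eq_bigr => i ->.
have -> : x i - a i = (x i - m) + (m - a i) by rewrite addrA subrK.
by rewrite !enorm_sq (edot_sqrD (x i - m)); ring.
Qed.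

Lemma balance_cross P D c x m : (forall i j, D j i = - D i j) ->
  (forall i, P i -> a i + \sum_(j < n | P j) w j *: D i j = c) ->
  \sum_(i < n | P i) w i *: (x i - m) = 0 ->
  2%:R * \sum_(i < n | P i) w i * edot (x i - m) (m - a i) =
  \sum_(i < n | P i) \sum_(j < n | P j) w i * w j * edot (x i - x j) (D i j).
Proof.
move=> D_anti hc centered.
set K := \sum_(i < n | P i) \sum_(j < n | P j) w i * w j * edot (x i - m) (D i j).
have -> : \sum_(i < n | P i) w i * edot (x i - m) (m - a i) = K.
  have -> : \sum_(i < n | P i) w i * edot (x i - m) (m - a i) =
      edot (\sum_(i < n | P i) w i *: (x i - m)) (m - c)
      + \sum_(i < n | P i) w i * edot (x i - m) (\sum_(j < n | P j) w j *: D i j).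
    rewrite edot_suml -big_split; apply: eq_bigr => i Pi /=.
    rewrite edotZl -mulrDr -edotDr -(hc i Pi).
    by congr (_ * edot _ _); rewrite opprD addrA subrK.
  rewrite centered edot0l add0r; apply: eq_bigr => i _.
  by rewrite edot_sumr mulr_sumr; apply: eq_bigr => j _; rewrite edotZr mulrA.
have swapK : \sum_(i < n | P i) \sum_(j < n | P j) w i * w j * edot (x j - m) (D i j) = - K.
  rewrite exchange_big /K -sumrN; apply: eq_bigr => i _; rewrite -sumrN.
  by apply: eq_bigr => j _; rewrite D_anti edotNr (mulrC (w j)) mulrN.
have -> : \sum_(i < n | P i) \sum_(j < n | P j) w i * w j * edot (x i - x j) (D i j) =
    K - \sum_(i < n | P i) \sum_(j < n | P j) w i * w j * edot (x j - m) (D i j).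
  rewrite /K -sumrB; apply: eq_bigr => i _; rewrite -sumrB; apply: eq_bigr => j _.
  by rewrite -mulrBr -edotBl opprB addrA subrK.
by rewrite swapK opprK; ring.
Qed.

Lemma balanced_group_fuses t1 t2 P l D c x :
  P l -> t1 <= t2 -> (forall i j, D j i = - D i j) ->
  (forall i j, P i -> P j -> enorm (D i j) <= t1) ->
  (forall i, P i -> a i + \sum_(j < n | P j) w j *: D i j = c) ->
  is_minimizerP a w t2 x -> forall i, P i -> x i = x l.
Proof.
move=> Pl t12 D_anti D_le hc hx.
have t10 : 0 <= t1 by apply: le_trans (D_le l l Pl Pl); apply: enorm_ge0.
set m := wmean P x.
set B := \sum_(i < n | P i) \sum_(j < n | P j) w i * w j * enorm (x i - x j).
set S := \sum_(i < n | P i) w i * edot (x i - m) (x i - m).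
have S0 : 0 <= S by apply: sumr_ge0 => i _; rewrite mulr_ge0 ?edot_ge0 ?ltW.
have B0 : 0 <= B.
  by apply: sumr_ge0 => i _; apply: sumr_ge0 => j _; rewrite !mulr_ge0 ?enorm_ge0 ?ltW.
have cross : - (2%:R * \sum_(i < n | P i) w i * edot (x i - m) (m - a i)) <= t2 * B.
  rewrite (balance_cross D_anti hc (wmean_centered x Pl)) -sumrN mulr_sumr.
  apply: ler_sum => i Pi; rewrite -sumrN mulr_sumr; apply: ler_sum => j Pj.
  rewrite -mulrN mulrCA ler_pM2l ?mulr_gt0 // mulrC (le_trans (cauchy_schwarzN _ _)) //.
  by rewrite ler_wpM2l ?enorm_ge0 // (le_trans (D_le i j Pi Pj)).
have pen := collapse_penalty x Pl.
have := hx (collapse P m x).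
rewrite /objP -/(penalty w x) -/(penalty w (collapse P m x)) collapse_fit -/S !penalty_full.
have t20 : 0 <= t2 by apply: le_trans t12.
have : t2 * full_penalty (collapse P m x) <= t2 * full_penalty x - t2 * B.
  by rewrite -mulrBr ler_wpM2l // lerBrDr.
move=> penM fitM; have {fitM S0} : S == 0 by rewrite eq_le S0 andbT; lra.
rewrite psumr_eq0 => [/allP S0|i _]; last by rewrite mulr_ge0 ?edot_ge0 ?ltW.
have xm i : P i -> x i = m.
  move=> Pi; have /= := S0 i (mem_index_enum i); rewrite Pi mulf_eq0 gt_eqF //=.
  by move/eqP/edot_eq0/eqP; rewrite subr_eq0 => /eqP.
by move=> i Pi; rewrite !xm.
Qed.

End Clusters.

Lemma continuous_sum (R : realType) (T : topologicalType) (I : Type) (r : seq I)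
    (P : pred I) (F : I -> T -> R) :
  (forall i, continuous (F i)) -> continuous (fun x => \sum_(i <- r | P i) F i x).
Proof.
by move=> F_cont; apply: continuous_big => [|i _]; [exact: add_continuous|exact: F_cont].
Qed.

Lemma continuous_mul (R : realType) (T : topologicalType) (f g : T -> R) :
  continuous f -> continuous g -> continuous (fun x => f x * g x).
Proof. by move=> f_cont g_cont x; apply: continuousM; [exact: f_cont|exact: g_cont]. Qed.

Lemma continuous_opp (R : realType) (T : topologicalType) (f : T -> R) :
  continuous f -> continuous (fun x => - f x).
Proof. by move=> f_cont x; apply: continuousN; exact: f_cont. Qed.

Lemma continuous_sub (R : realType) (T : topologicalType) (f g : T -> R) :
  continuous f -> continuous g -> continuous (fun x => f x - g x).
Proof. by move=> f_cont g_cont x; apply: continuousB; [exact: f_cont|exact: g_cont]. Qed.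

(* The reduced dual objective is a polynomial in the coordinates of delta; to
   maximise it over the compact feasible set we encode delta as a row vector. *)

Section Existence.
Local Open Scope classical_set_scope.
Variables (R : realType) (n d : nat) (a : 'I_n -> 'rV[R]_d) (w : 'I_n -> R).

Definition dvar_of_row (V : 'rV[R]_(n * n * d)) : dvar R n d :=
  fun i j => \row_k V 0 (mxvec_index (mxvec_index i j) k).

Definition row_of_dvar (delta : dvar R n d) : 'rV[R]_(n * n * d) :=
  mxvec (\matrix_(p, k) (mxvec (\matrix_(i, j) delta i j 0 k)) 0 p).

Lemma row_of_dvarK delta : dvar_of_row (row_of_dvar delta) = delta.
Proof.
apply: funext => i; apply: funext => j; apply/rowP => k.
by rewrite !mxE mxvecE mxE mxvecE mxE.
Qed.

Lemma continuous_coord_dvar i j k : continuous (fun V => dvar_of_row V i j 0 k).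
Proof. by under eq_fun do rewrite mxE; apply: coord_continuous. Qed.

Lemma continuous_dshift i k : continuous (fun V => dshift w (dvar_of_row V) i 0 k).
Proof.
under eq_fun do rewrite /dshift summxE.
apply: continuous_sum => j; under eq_fun do rewrite mxE.
have dang_cont : continuous (fun V => dang (dvar_of_row V) i j 0 k).
  rewrite /dang; case: (i < j)%N; first exact: continuous_coord_dvar.
  case: (j < i)%N; last by under eq_fun do rewrite mxE; apply: cst_continuous.
  by under eq_fun do rewrite mxE; apply: continuous_opp; apply: continuous_coord_dvar.
by apply: continuous_mul; [exact: cst_continuous|exact: dang_cont].
Qed.

Lemma continuous_rdual : continuous (fun V => rdual a w (dvar_of_row V)).
Proof.
rewrite /rdual /edot; apply: continuous_sum => i.
apply: continuous_mul; first exact: cst_continuous.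
apply: continuous_sub.
  apply: continuous_opp.
  by apply: continuous_sum => k; apply: continuous_mul;
    [exact: cst_continuous|exact: continuous_dshift].
apply: continuous_mul; first exact: cst_continuous.
by apply: continuous_sum => k; apply: continuous_mul; exact: continuous_dshift.
Qed.

(* Weierstrass: rdual attains its maximum on the compact set of feasible delta. *)
Lemma ropt_exists t : 0 <= t -> exists delta, ropt a w t delta.
Proof.
move=> t0.
pose A := [set V : 'rV[R]_(n * n * d) | forall q, `[- t, t]%classic (V ord0 q)] `&`
          [set V | forall i j : 'I_n, edot (dvar_of_row V i j) (dvar_of_row V i j) <= t ^+ 2].
have A_compact : compact A.
  apply: compact_closedI.
    by apply: (@rV_compact _ _ (fun _ => `[- t, t]%classic)) => q; exact: segment_compact.
  rewrite (_ : [set V | _] = \bigcap_(p in [set: 'I_n * 'I_n])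
      ((fun V => edot (dvar_of_row V p.1 p.2) (dvar_of_row V p.1 p.2)) @^-1`
       [set x | x <= t ^+ 2])); last first.
    by apply/seteqP; split => V /= hV; [move=> [i j] _; exact: hV|move=> i j; exact: (hV (i, j))].
  apply: closed_bigI => p _; apply: preimage_closed; last exact: closed_le.
  move=> V _; rewrite /edot; apply: continuous_sum => k.
  by apply: continuous_mul; exact: continuous_coord_dvar.
have A_feas delta : dfeas t delta -> A (row_of_dvar (dproj delta)).
  move=> hf; have hb := dproj_le t0 hf; split => /=.
    move=> q; case/mxvec_indexP: q => p k; case/mxvec_indexP: p => i j.
    have -> : row_of_dvar (dproj delta) ord0 (mxvec_index (mxvec_index i j) k)
        = dvar_of_row (row_of_dvar (dproj delta)) i j 0 k by rewrite mxE.
    by rewrite row_of_dvarK in_itv /= -ler_norml (le_trans (enorm_coord _ _)).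
  by move=> i j; rewrite row_of_dvarK -enorm_sq lerXn2r ?nnegrE ?enorm_ge0.
have A0 : A !=set0.
  exists 0; split => /= [q|i j]; first by rewrite mxE in_itv /= oppr_le0 t0.
  have -> : dvar_of_row 0 i j = 0 by apply/rowP => k; rewrite !mxE.
  by rewrite edot0l sqr_ge0.
have [V /set_mem [_ V_le] V_max] :=
  compact_EVT_max A0 A_compact (continuous_subspaceT continuous_rdual).
exists (dvar_of_row V); split.
  move=> i j _; rewrite enormE -(ger0_norm t0) -sqrtr_sqr ler_sqrt ?sqr_ge0 //.
move=> delta hf; rewrite -rdual_dproj -[dproj delta]row_of_dvarK.
by apply: V_max; apply/mem_set; apply: A_feas.
Qed.

End Existence.

Section SOCP.
Variables (R : realType) (n d : nat) (a : 'I_n -> 'rV[R]_d) (w : 'I_n -> R).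
Hypothesis hw : forall i, 0 < w i.
Implicit Types (delta : dvar R n d) (beta : 'I_n -> 'rV[R]_d) (gamma : 'I_n -> R).

Lemma cone_gamma_le (b : 'rV[R]_d) (g : R) :
  Num.sqrt (enorm b ^+ 2 + g ^+ 2) <= 1 - g -> 2%:R * g <= 1 - edot b b.
Proof.
rewrite enorm_sq => h; set s := Num.sqrt _ in h.
have s0 : 0 <= s by apply: sqrtr_ge0.
have ss : s ^+ 2 = edot b b + g ^+ 2 by rewrite sqr_sqrtr // addr_ge0 ?edot_ge0 ?sqr_ge0.
have : s * s <= (1 - g) * (1 - g) by nra.
by rewrite -expr2 ss; nra.
Qed.

Lemma cone_gamma_feas (b : 'rV[R]_d) :
  Num.sqrt (enorm b ^+ 2 + ((1 - edot b b) / 2%:R) ^+ 2) <= 1 - (1 - edot b b) / 2%:R.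
Proof.
rewrite enorm_sq.
have -> : edot b b + ((1 - edot b b) / 2%:R) ^+ 2 = ((1 + edot b b) / 2%:R) ^+ 2 by field.
rewrite sqrtr_sqr ger0_norm; last by rewrite divr_ge0 ?ler0n // addr_ge0 ?edot_ge0.
by rewrite le_eqVlt; apply/orP; left; apply/eqP; field.
Qed.

Lemma objD_le_rdual t delta beta gamma : feasD w t delta beta gamma ->
  objD a w beta gamma <= rdual a w delta + 2^-1 * \sum_(i < n) w i.
Proof.
move=> [hb [_ hg]]; rewrite /objD /rdual mulr_sumr -!big_split; apply: ler_sum => i _ /=.
have gi := cone_gamma_le (hg i).
have bi : beta i = - dshift w delta i by apply/eqP; rewrite -addr_eq0 addrC hb.
rewrite bi edotNl edotNr opprK in gi; rewrite bi edotNr.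
by have := hw i; nra.
Qed.

Lemma feasD_rdual t delta : dfeas t delta -> exists beta gamma,
  feasD w t delta beta gamma /\ objD a w beta gamma = rdual a w delta + 2^-1 * \sum_(i < n) w i.
Proof.
move=> hf; pose b i := - dshift w delta i.
exists b, (fun i => (1 - edot (b i) (b i)) / 2%:R); split.
  by split; [move=> i; rewrite addrN|split=> // i; exact: cone_gamma_feas].
rewrite /objD /rdual mulr_sumr -!big_split; apply: eq_bigr => i _ /=.
have two0 : (2%:R : R) != 0 by rewrite pnatr_eq0.
by rewrite /b edotNr edotNl edotNr opprK; field.
Qed.

Lemma optD_ropt t delta beta gamma : optD a w t delta beta gamma -> ropt a w t delta.
Proof.
move=> [hfeas hopt]; split => [|delta' hf]; first exact: (proj1 (proj2 hfeas)).
have [beta' [gamma' [hf' obj']]] := feasD_rdual hf.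
by have := hopt _ _ _ hf'; have := objD_le_rdual hfeas; rewrite obj'; lra.
Qed.

Lemma optD_same_shift t delta delta' beta gamma : optD a w t delta beta gamma ->
  dfeas t delta' -> (forall i, dshift w delta' i = dshift w delta i) ->
  optD a w t delta' beta gamma.
Proof.
move=> [[hb [_ hg]] hopt] hf' same; split=> //; split=> [i|]; last by split.
by move: (hb i); rewrite -/(dshift w delta i) -(same i).
Qed.

End SOCP.

Lemma rel_interior_extrapolate (R : realType) (n d : nat) (S : dvar R n d -> Prop)
    (z z' : dvar R n d) (M : R) :
  rel_interior S z -> S z' -> 0 < M -> (forall i j, enorm (z i j - z' i j) <= M) ->
  exists2 s : R, 0 < s & S (fun i j => (1 + s) *: z i j - s *: z' i j).
Proof.
move=> [Sz [eps [eps0 heps]]] Sz' M0 zM.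
pose s := eps / (2%:R * M); have s0 : 0 < s by rewrite divr_gt0 ?mulr_gt0.
exists s => //; apply: heps.
  exists 2, (fun k : 'I_2 => if k == ord0 then 1 + s else - s),
    (fun k : 'I_2 => if k == ord0 then z else z').
  split; first by move=> k; case: ifP.
  split; first by rewrite !big_ord_recl big_ord0 /=; lra.
  by move=> i j; rewrite !big_ord_recl big_ord0 /= addr0 scaleNr.
move=> i j; have -> : (1 + s) *: z i j - s *: z' i j - z i j = s *: (z i j - z' i j).
  by apply/rowP => k; rewrite !mxE; ring.
rewrite enormZ ger0_norm ?ltW // (le_lt_trans (ler_wpM2l (ltW s0) (zM i j))) //.
have M0' : M != 0 by rewrite gt_eqF.
have -> : s * M = eps / 2%:R by rewrite /s; field.
by lra.
Qed.

Lemma ropt_clusters_persist (R : realType) (n d : nat) (a : 'I_n -> 'rV[R]_d)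
    (w : 'I_n -> R) (hw : forall i, 0 < w i) t1 t2 delta y (l : 'I_n) :
  0 <= t1 -> t1 <= t2 -> ropt a w t1 delta -> is_minimizerP a w t2 y ->
  forall k, dpoint a w delta k = dpoint a w delta l -> y k = y l.
Proof.
move=> t10 t12 ho hy; have [c hc] := ropt_cluster_balance hw l ho.
pose P k := dpoint a w delta k == dpoint a w delta l.
move=> k /eqP Pk.
apply: (@balanced_group_fuses R n d a w hw t1 t2 P l (dang delta) c y _ t12 _ _ _ hy k Pk).
- by rewrite /P eqxx.
- exact: dang_anti.
- by move=> i j _ _; apply: dang_le (proj1 ho) i j.
- by move=> i /eqP; apply: hc.
Qed.

Section StrictSlack.
Variables (R : realType) (n d : nat) (a : 'I_n -> 'rV[R]_d) (w : 'I_n -> R).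
Hypothesis hw : forall i, 0 < w i.
Variables (lam : R) (x : 'I_n -> 'rV[R]_d).
Hypotheses (hlam : 0 < lam) (hnf : ~ fusion_value a w lam) (hx : is_minimizerP a w lam x).
Implicit Types (i j k l : 'I_n).

(* Since lam is not a fusion value, all points fused at lam are already fused
   at a common level T < lam. *)
Lemma fused_below l : exists T, [/\ 0 <= T, T < lam & forall i, i != l /\ x i = x l ->
  exists2 v, v <= T & 0 < v /\ exists2 x', is_minimizerP a w v x' & x' i = x' l].
Proof.
have [delta0 ho] := ropt_exists a w (ltW hlam).
have x_unique y : is_minimizerP a w lam y -> y = x.
  by move=> hy; rewrite (ropt_minimizer_unique hw ho hy) (ropt_minimizer_unique hw ho hx).
apply: finite_common_bound => // i [il xil]; apply: contrapT => none_below.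
apply: hnf; split => //; exists i, l; split=> //; split=> [y /x_unique -> //|v v0 vlam y hy yil].
by apply: none_below; exists v => //; split => //; exists y.
Qed.

Lemma cluster_formed_below l : exists T ds, [/\ 0 <= T, T < lam, ropt a w T ds &
  forall k, (dpoint a w ds k == dpoint a w ds l) = (x k == x l)].
Proof.
have [T [T0 Tlam fusedT]] := fused_below l; have [ds hs] := ropt_exists a w T0.
exists T, ds; split=> // k; apply/eqP/eqP => [zkl|xkl].
  exact: (ropt_clusters_persist hw T0 (ltW Tlam) hs hx).
have [<-//|kl] := eqVneq k l.
have [v vT [v0 [y hy ykl]]] := fusedT k (conj kl xkl).
have [dv hv] := ropt_exists a w (ltW v0).
apply: (ropt_clusters_persist hw (ltW v0) vT hv (ropt_minimizer hw hs)).
by rewrite -(ropt_minimizer_unique hw hv hy).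
Qed.

(* The dual variables of an optimal solution at lam stay optimal when those
   inside the cluster of l are replaced by the ones of a reduced dual solution
   ds at a level T <= lam having the same cluster: both families balance the
   same data, so the shifts S_i are unchanged. *)
Lemma cluster_swap_optimal l delta0 beta0 gamma0 T ds :
  optD a w lam delta0 beta0 gamma0 -> 0 <= T -> T <= lam -> ropt a w T ds ->
  (forall k, (dpoint a w ds k == dpoint a w ds l) = (x k == x l)) ->
  optD a w lam (fun i j => if (x i == x l) && (x j == x l) then dang ds i j
                           else delta0 i j) beta0 gamma0.
Proof.
move=> hopt T0 Tlam hs same_cluster; set C := fun k => x k == x l.
set dn : dvar R n d := fun i j => _.
have ho := optD_ropt hw hopt.
have xE : x = dpoint a w delta0 := ropt_minimizer_unique hw ho hx.
have [c0 hc0] := ropt_cluster_balance hw l ho.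
have [cs hcs] := ropt_cluster_balance hw l hs.
have bal0 i : C i -> a i + \sum_(j < n | C j) w j *: dang delta0 i j = c0.
  by move=> /eqP Ci; rewrite (eq_bigl _ _ (fun j => erefl (C j))) /C xE hc0 // -xE.
have bals i : C i -> a i + \sum_(j < n | C j) w j *: dang ds i j = cs.
  move=> Ci; rewrite -(eq_bigl _ _ same_cluster); apply: hcs; apply/eqP.
  by rewrite same_cluster.
have c0E : c0 = cs.
  have W0 : 0 < \sum_(i < n | C i) w i by apply: (sum_w_gt0 hw (l := l)); rewrite /C eqxx.
  apply: (scalerI (lt0r_neq0 W0)).
  by rewrite (balance_mean (dang_anti delta0) bal0) (balance_mean (dang_anti ds) bals).
have dang_dn i j : dang dn i j = if C i && C j then dang ds i j else dang delta0 i j.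
  rewrite /dn /dang /C; case: (ltngtP i j) => _; rewrite ?if_same // andbC.
  by case: ifP.
apply: (optD_same_shift hopt).
  move=> i j ij; rewrite /dn; case: ifP => _; last exact: (proj1 ho).
  exact: le_trans (dang_le T0 (proj1 hs) i j) Tlam.
move=> i; rewrite /dshift (bigID C) [RHS](bigID C) /=; have [Ci|nCi] := boolP (C i).
  congr (_ + _); last by apply: eq_bigr => j /negbTE Cj; rewrite dang_dn Cj andbF.
  apply: (addrI (a i)); rewrite bal0 // c0E -(bals i Ci).
  by congr (_ + _); apply: eq_bigr => j Cj; rewrite dang_dn Ci Cj.
by congr (_ + _); apply: eq_bigr => j _; rewrite dang_dn (negbTE nCi).
Qed.

Lemma cluster_slack_strict deltaa : rel_interior (opt_delta_set a w lam) deltaa ->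
  forall l l', (l < l')%N -> x l = x l' -> enorm (deltaa l l') < lam.
Proof.
move=> hda l l' ll' xll'; have [[delta0 [beta0 [gamma0 [hopt da]]]] _] := hda.
have ho := optD_ropt hw hopt.
have da_le i j : enorm (deltaa i j) <= lam.
  by rewrite da; apply: dproj_le (ltW hlam) (proj1 ho) i j.
rewrite lt_neqAle (da_le l l') andbT; apply/negP => /eqP da_eq.
have [T [ds [T0 Tlam hs same]]] := cluster_formed_below l.
have hopt' := cluster_swap_optimal hopt T0 (ltW Tlam) hs same.
set dn := fun i j => _ in hopt'.
have dn_le i j : enorm (dproj dn i j) <= lam.
  exact: dproj_le (ltW hlam) (proj1 (proj2 (proj1 hopt'))) i j.
have dist i j : enorm (deltaa i j - dproj dn i j) <= 2%:R * lam.
  by rewrite (le_trans (enormD _ _)) // enormN; have := da_le i j; have := dn_le i j; lra.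
have Sdn : opt_delta_set a w lam (dproj dn) by exists dn, beta0, gamma0.
have [s s0 [dy [bety [gamy [hy Yy]]]]] :=
  rel_interior_extrapolate hda Sdn (mulr_gt0 (ltr0n _ 2) hlam) dist.
have dy_le := proj1 (proj2 (proj1 hy)) l l' ll'.
have /= := congr1 (fun f => f l l') Yy; rewrite /dproj /dn ll' xll' eqxx /= => dyE.
have := enorm_lbB ((1 + s) *: deltaa l l') (s *: dang ds l l').
rewrite dyE !enormZ da_eq (ger0_norm (ltW s0)) ger0_norm; last by lra.
by have := dang_le T0 (proj1 hs) l l'; nra.
Qed.

End StrictSlack.

Unset Implicit Arguments.

Theorem lemma7p2 (R : realType) (n d : nat) (hn : (2 <= n)%N) (hd : (1 <= d)%N)
  (a : 'I_n -> 'rV[R]_d) (w : 'I_n -> R) (hw : forall i, 0 < w i)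
  (lam : R) (hlam : 0 < lam) (hnf : ~ fusion_value a w lam)
  (x : 'I_n -> 'rV[R]_d) (hx : is_minimizerP a w lam x)
  (deltaa : dvar R n d) (hda : rel_interior (opt_delta_set a w lam) deltaa) :
  let r := \big[Num.min/lam]_(l < n)
             \big[Num.min/lam]_(l' < n | (l < l')%N && (x l == x l'))
               (lam - enorm (deltaa l l')) in
  0 < r /\
  forall p' mu : R, 0 <= p' -> 0 <= mu ->
  forall delta : dvar R n d,
    (forall i j : 'I_n, (i < j)%N -> enorm (delta i j - deltaa i j) <= p' * mu) ->
    forall i j : 'I_n, (i < j)%N -> x i = x j ->
      enorm (delta i j) <= lam - r + p' * mu.
Proof.
move=> r; have strict := cluster_slack_strict hw hlam hnf hx hda.
split.
  apply/bigmin_gtP; split => // l _; apply/bigmin_gtP; split => // l' /andP[ll' /eqP xll'].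
  by rewrite subr_gt0 strict.
move=> p' mu _ _ delta close i j ij xij.
have r_le : r <= lam - enorm (deltaa i j).
  by apply: (bigmin_inf i) => //; apply: bigmin_le_cond; rewrite ij xij eqxx.
have := enormD (delta i j - deltaa i j) (deltaa i j); rewrite subrK.
by have := close i j ij; lra.
Qed.
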